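(* Let $e_1,e_2,e_3$ be nonzero integers with $e_1+e_2+e_3=0$. Let $\Lambda=(d_1,d_2,d_3)$ be a triple of nonzero square-free integers with $d_1d_2d_3$ a square. Let $n$ be a positive square-free integer coprime with $e_1e_2e_3$ and $p$ an odd prime factor of $n$. Then $D^{(n)}_\Lambda(\mathbb{Q}_p)\neq\emptyset$ if and only if - $\left(\frac{d_1}{p}\right)=\left(\frac{d_2}{p}\right)=\left(\frac{d_3}{p}\right)=1$, in case $p\nmid d_1d_2d_3$; - $\left(\frac{-e_2e_3d_1}{p}\right)=\left(\frac{e_3n/d_2}{p}\right)=\left(\frac{-e_2n/d_3}{p}\right)=1$, in case $p\nmid d_1$, $p\mid d_2$, $p\mid d_3$; - $\left(\frac{-e_3n/d_1}{p}\right)=\left(\frac{-e_3e_1d_2}{p}\right)=\left(\frac{e_1n/d_3}{p}\right)=1$, in case $p\mid d_1$, $p\nmid d_2$, $p\mid d_3$; - $\left(\frac{e_2n/d_1}{p}\right)=\left(\frac{-e_1n/d_2}{p}\right)=\left(\frac{-e_1e_2d_3}{p}\right)=1$, in case $p\mid d_1$, $p\mid d_2$, $p\nmid d_3$.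
   Context: $D^{(n)}_\Lambda$ is the curve in $\mathbb{P}^3$ with coordinates $(t,u_1,u_2,u_3)$ defined by $e_1nt^2+d_2u_2^2-d_3u_3^2=0$, $e_2nt^2+d_3u_3^2-d_1u_1^2=0$, $e_3nt^2+d_1u_1^2-d_2u_2^2=0$. For a rational number $r$ which is a $p$-adic unit, $\left(\frac{r}{p}\right)$ is the Legendre symbol of its reduction modulo $p$ (so the arguments $n/d_i$ above, with $p\mid d_i$, are $p$-adic units). *)

From HB Require Import structures.
From mathcomp Require Import all_boot all_order all_algebra.
Set Implicit Arguments. Unset Strict Implicit. Unset Printing Implicit Defensive.
Import Order.TTheory GRing.Theory Num.Theory.
Local Open Scope ring_scope.

Definition sqfree (n : nat) : Prop :=
  forall q : nat, prime q -> ~~ (q * q %| n)%N.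

Definition sqfreez (d : int) : Prop := sqfree (absz d).

(* An element of Z_p = lim Z/p^k Z is represented by integers x k (k : nat),
   x k being a representative of its image in Z/p^k, with the compatibility
   x (k+1) = x k mod p^k. *)
Definition Zp_coherent (p : nat) (x : nat -> int) : Prop :=
  forall k : nat, (x k.+1 == x k %[mod (p ^ k)%:Z])%Z.

Definition Zp_nonzero (p : nat) (x : nat -> int) : Prop :=
  exists k : nat, ~~ ((p ^ k)%:Z %| x k)%Z.

Definition D_forms (e1 e2 e3 d1 d2 d3 : int) (n : nat)
    (t u1 u2 u3 : int) : int * int * int :=
  (e1 * n%:Z * t ^+ 2 + d2 * u2 ^+ 2 - d3 * u3 ^+ 2,
   e2 * n%:Z * t ^+ 2 + d3 * u3 ^+ 2 - d1 * u1 ^+ 2,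
   e3 * n%:Z * t ^+ 2 + d1 * u1 ^+ 2 - d2 * u2 ^+ 2).

(* D^{(n)}_Lambda(Q_p) is nonempty: there is a point (t:u1:u2:u3) of P^3(Q_p)
   on the curve.  Clearing denominators (the equations are homogeneous), this
   is the existence of a nonzero vector (t,u1,u2,u3) in Z_p^4 satisfying the
   three equations in Z_p, i.e. componentwise modulo every p^k. *)
Definition D_Qp_nonempty (p : nat) (e1 e2 e3 d1 d2 d3 : int) (n : nat) : Prop :=
  exists t u1 u2 u3 : nat -> int,
    [/\ [/\ Zp_coherent p t, Zp_coherent p u1, Zp_coherent p u2 & Zp_coherent p u3],
        (Zp_nonzero p t \/ Zp_nonzero p u1 \/ Zp_nonzero p u2 \/ Zp_nonzero p u3)
      & forall k : nat,
        let F := D_forms e1 e2 e3 d1 d2 d3 n (t k) (u1 k) (u2 k) (u3 k) in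
        [/\ ((p ^ k)%:Z %| F.1.1)%Z, ((p ^ k)%:Z %| F.1.2)%Z
           & ((p ^ k)%:Z %| F.2)%Z]].

Definition legendreF (p : nat) (x : 'F_p) : int :=
  if x == 0 then 0 else if [exists y : 'F_p, y ^+ 2 == x] then 1 else -1.

(* Reduction modulo p of a rational number (meaningful when r is a p-adic
   unit, i.e. p divides neither numerator nor denominator). *)
Definition redp (p : nat) (r : rat) : 'F_p :=
  (numq r)%:~R / (denq r)%:~R.

Definition legendre (r : rat) (p : nat) : int := legendreF (redp p r).

From mathcomp Require Import all_boot all_order all_algebra.
From mathcomp Require Import ring.
Import Order.TTheory GRing.Theory Num.Theory.
Set Implicit Arguments. Unset Strict Implicit. Unset Printing Implicit Defensive.
Local Open Scope ring_scope.

(* A Q_p-point of the curve can be scaled to a primitive Z_p-point (t, u1, u2, u3), and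
   since p | n the equations modulo p and p^2 pin down its shape.  If p does not divide
   d1 d2 d3, they give d3 u3^2 = d1 u1^2 = d2 u2^2 mod p with all u_i units, so the d_i
   share one quadratic character, which is trivial because d1 d2 d3 is a square.  If
   p | d2, d3, write d_i = p d_i' and n = p n': then p | u1, t is a unit, and dividing
   by p gives d2' u2^2 = e3 n' t^2 and d3' u3^2 = -e2 n' t^2 mod p; the condition on
   -e2 e3 d1 follows since d1 d2' d3' is a square.  Conversely, for odd p, Hensel's
   lemma lifts the square roots to Z_p, giving the points (0, r2 r3, r1 r3, r1 r2) with
   r_i^2 = d_i, resp. (d2' d3', 0, d3' q2, d2' q3) with q2^2 = e3 n' d2' and
   q3^2 = -e2 n' d3'.  The last two cases follow by cyclic symmetry of the equations. *)

Lemma PoszX (m k : nat) : (m ^ k)%:Z = m%:Z ^+ k.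
Proof. by rewrite -!natz natrX. Qed.

Lemma mulf_sqr_eq0 (F : idomainType) (c x : F) :
  c != 0 -> (c * x ^+ 2 == 0) = (x == 0).
Proof. by move=> c0; rewrite mulf_eq0 (negbTE c0) expf_eq0. Qed.

Lemma dvdz_addMr (m a b : int) : (m %| a + m * b)%Z = (m %| a)%Z.
Proof. by rewrite rpredDr // dvdz_mulr. Qed.

Lemma dvdz_sqr_addMr (m a b : int) : (m ^+ 2 %| a + m * b)%Z -> (m %| a)%Z.
Proof. by rewrite -(dvdz_addMr m a b); apply: dvdz_trans; rewrite expr2 dvdz_mulr. Qed.

Lemma dvdz_sqr_mulDMr (m a b : int) :
  m != 0 -> (m ^+ 2 %| m * (a + m * b))%Z = (m %| a)%Z.
Proof. by move=> m0; rewrite expr2 dvdz_mul2l // dvdz_addMr. Qed.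

Lemma newton_sqrt_step (m a y w r : int) (k : nat) :
  (m %| 1 - 2 * y * w)%Z -> (m ^+ k.+1 %| r ^+ 2 - a)%Z -> (m %| r - y)%Z ->
  (m ^+ k.+2 %| (r - (r ^+ 2 - a) * w) ^+ 2 - a)%Z.
Proof.
move=> m_w m_r m_ry.
have -> : (r - (r ^+ 2 - a) * w) ^+ 2 - a =
    (r ^+ 2 - a) * ((1 - 2 * y * w) - 2 * w * (r - y)) + (r ^+ 2 - a) ^+ 2 * w ^+ 2.
  by ring.
apply: rpredD.
  by rewrite (exprSr m k.+1); apply: (dvdz_mul m_r); apply: rpredB => //; apply: dvdz_mull.
apply: dvdz_mulr; apply: dvdz_trans (dvdz_exp2r 2 m_r); rewrite -exprM.
by apply: dvdz_exp2l; rewrite mulnC mul2n -addnn addSn ltnS leq_addl.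
Qed.

Lemma dvdz_scale_primitive (m : int) (k : nat) (s : seq int) :
  m != 0 -> ~~ all (dvdz (m ^+ k)) s ->
  exists2 j : nat, (j < k)%N &
    exists2 s' : seq int, s = map ( *%R (m ^+ j)) s' & ~~ all (dvdz m) s'.
Proof.
move=> m0; elim: k s => [|k IHk] s.
  by rewrite expr0; case/allPn => x _ /negP[]; exact: dvd1z.
have [/allP sm | s_prim _] := boolP (all (dvdz m) s); last first.
  by exists 0%N => //; exists s => //; rewrite expr0 (eq_map (@mul1r _)) map_id.
have -> : s = map ( *%R m) (map (fun x => x %/ m)%Z s).
  by rewrite -map_comp map_id_in // => x /sm /divzK; rewrite mulrC.
rewrite all_map (eq_all (a2 := dvdz (m ^+ k))) => [/IHk [j lt_jk [s' -> s'_prim]]|x].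
  exists j.+1 => //; exists s' => //.
  by rewrite -map_comp exprS; apply: eq_map => x /=; rewrite mulrA.
by rewrite exprS; exact: dvdz_mul2l m0.
Qed.

Section Legendre.
Variable p : nat.

Lemma legendreF1P (x : 'F_p) :
  legendreF x = 1 <-> x != 0 /\ exists y, y ^+ 2 = x.
Proof.
rewrite /legendreF; have [->|x0] := eqVneq x 0; first by split=> [/eqP|[]].
case: existsP => [[y /eqP y2x]|no_root]; first by split=> // _; split=> //; exists y.
by split=> [/eqP|[_ [y y2x]]] //; case: no_root; exists y; rewrite y2x.
Qed.

Lemma legendreF_sqr (y : 'F_p) : y != 0 -> legendreF (y ^+ 2) = 1.
Proof. by move=> y0; apply/legendreF1P; split; [rewrite expf_neq0 | exists y]. Qed.

Lemma legendreF_mul_sqr (x y : 'F_p) : y != 0 -> legendreF (x * y ^+ 2) = legendreF x.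
Proof.
move=> y0; have y20 : y ^+ 2 != 0 by rewrite expf_neq0.
rewrite /legendreF mulf_eq0 (negbTE y20) orbF; case: eqP => // _.
congr (if _ then _ else _); apply/existsP/existsP => -[z /eqP z2].
  by exists (z / y); rewrite expr_div_n z2 mulfK.
by exists (z * y); rewrite exprMn z2.
Qed.

Lemma legendreF_diag_squares (d1 d2 d3 s u1 u2 u3 : 'F_p) :
  d3 != 0 -> u1 != 0 -> u2 != 0 -> u3 != 0 -> d1 * d2 * d3 = s ^+ 2 ->
  d3 * u3 ^+ 2 = d1 * u1 ^+ 2 -> d1 * u1 ^+ 2 = d2 * u2 ^+ 2 ->
  [/\ legendreF d1 = 1, legendreF d2 = 1 & legendreF d3 = 1].
Proof.
move=> d3u u1u u2u u3u ds E31 E12.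
have d1E : d1 = d3 * (u3 / u1) ^+ 2 by rewrite expr_div_n mulrA E31 mulfK // expf_neq0.
have d2E : d2 = d3 * (u3 / u2) ^+ 2 by rewrite expr_div_n mulrA E31 E12 mulfK // expf_neq0.
have d3_sqr : legendreF d3 = 1.
  set y := d3 * (u3 / u1) * (u3 / u2).
  have y0 : y != 0 by rewrite !mulf_neq0 ?invr_eq0.
  have sE : s ^+ 2 = d3 * y ^+ 2 by rewrite -ds {1}d1E {1}d2E /y; ring.
  have s0 : s != 0 by rewrite -sqrf_eq0 sE mulf_sqr_eq0.
  by rewrite -(legendreF_mul_sqr _ y0) -sE legendreF_sqr.
by rewrite d1E d2E !legendreF_mul_sqr ?(mulf_neq0, invr_eq0).
Qed.

Lemma legendreF_twisted_squares (a b c d1 d2 d3 s t u2 u3 : 'F_p) :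
  a != 0 -> b != 0 -> c != 0 -> d1 != 0 -> d2 != 0 -> d3 != 0 -> t != 0 ->
  d1 * d2 * d3 = s ^+ 2 -> d2 * u2 ^+ 2 = a * c * t ^+ 2 -> d3 * u3 ^+ 2 = b * c * t ^+ 2 ->
  [/\ legendreF (b * a * d1) = 1, legendreF (a * c / d2) = 1 & legendreF (b * c / d3) = 1].
Proof.
move=> a0 b0 c0 d10 d20 d30 t0 ds E2 E3.
have u20 : u2 != 0 by rewrite -(mulf_sqr_eq0 _ d20) E2 mulf_sqr_eq0 // mulf_neq0.
have u30 : u3 != 0 by rewrite -(mulf_sqr_eq0 _ d30) E3 mulf_sqr_eq0 // mulf_neq0.
have s0 : s != 0 by rewrite -sqrf_eq0 -ds !mulf_neq0.
have quot_sqr d u f : d != 0 -> d * u ^+ 2 = f * c * t ^+ 2 -> f * c / d = (u / t) ^+ 2.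
  move=> dn0 E; apply: (mulfI dn0); rewrite expr_div_n [d * (_ / _ ^+ 2)]mulrA E.
  by rewrite mulfK ?expf_neq0 // mulrCA divff ?mulr1.
split.
- rewrite -(legendreF_mul_sqr _ (mulf_neq0 (expf_neq0 2 t0) c0)).
  rewrite (_ : b * a * d1 * _ = (u2 * u3 * s) ^+ 2) ?legendreF_sqr ?mulf_neq0 //.
  rewrite !exprMn -ds; transitivity (d1 * (d2 * u2 ^+ 2) * (d3 * u3 ^+ 2)).
    by rewrite E2 E3; ring.
  by ring.
- by rewrite (quot_sqr _ u2) ?legendreF_sqr ?mulf_neq0 ?invr_eq0.
- by rewrite (quot_sqr _ u3) ?legendreF_sqr ?mulf_neq0 ?invr_eq0.
Qed.

End Legendre.

Section PadicSequences.
Variable p : nat.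
Local Notation P := p%:Z.

Definition is_Zp_sqrt (a : int) (r : nat -> int) : Prop :=
  Zp_coherent p r /\ forall k, ((p ^ k)%:Z %| r k ^+ 2 - a)%Z.

Lemma Zp_coherent_const (c : int) : Zp_coherent p (fun=> c).
Proof. by move=> k; rewrite eqxx. Qed.

Lemma Zp_coherent_mul (x y : nat -> int) :
  Zp_coherent p x -> Zp_coherent p y -> Zp_coherent p (fun k => x k * y k).
Proof.
move=> cx cy k; move: (cx k) (cy k); rewrite !eqz_mod_dvd => dx dy.
have -> : x k.+1 * y k.+1 - x k * y k = x k.+1 * (y k.+1 - y k) + (x k.+1 - x k) * y k.
  by ring.
by apply: rpredD; [apply: dvdz_mull | apply: dvdz_mulr].
Qed.

Lemma Zp_coherent_dvd_sub (x : nat -> int) (j k : nat) :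
  Zp_coherent p x -> (j <= k)%N -> (P ^+ j %| x k - x j)%Z.
Proof.
move=> cx; elim: k => [|k IHk]; first by rewrite leqn0 => /eqP ->; rewrite subrr dvdz0.
rewrite leq_eqVlt ltnS => /predU1P [->|le_jk]; first by rewrite subrr dvdz0.
have -> : x k.+1 - x j = (x k.+1 - x k) + (x k - x j) by ring.
apply: rpredD; last exact: IHk.
by apply: dvdz_trans (dvdz_exp2l _ le_jk) _; rewrite -PoszX -eqz_mod_dvd.
Qed.

Lemma Zp_nonzero_eventually (x : nat -> int) :
  Zp_coherent p x -> Zp_nonzero p x ->
  exists k, forall K, (k <= K)%N -> ~~ (P ^+ k %| x K)%Z.
Proof.
move=> cx [k nk]; exists k => K le_kK; apply: contra nk => dK.
rewrite PoszX (_ : x k = x K - (x K - x k)); last by ring.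
by apply: rpredB => //; apply: Zp_coherent_dvd_sub.
Qed.

Lemma D_Qp_nonempty_rot e1 e2 e3 d1 d2 d3 n :
  D_Qp_nonempty p e1 e2 e3 d1 d2 d3 n -> D_Qp_nonempty p e2 e3 e1 d2 d3 d1 n.
Proof.
case=> t [u1 [u2 [u3 [[ct c1 c2 c3] nz sol]]]]; exists t, u2, u3, u1; split=> //.
- by case: nz => [|[|[|]]]; tauto.
- by move=> k; case: (sol k).
Qed.

Lemma D_Qp_nonempty_rotP e1 e2 e3 d1 d2 d3 n :
  D_Qp_nonempty p e1 e2 e3 d1 d2 d3 n <-> D_Qp_nonempty p e2 e3 e1 d2 d3 d1 n.
Proof. by split=> [/D_Qp_nonempty_rot|/D_Qp_nonempty_rot/D_Qp_nonempty_rot]. Qed.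

End PadicSequences.

Lemma D_forms_scale e1 e2 e3 d1 d2 d3 n (c t u1 u2 u3 : int) :
  let F := D_forms e1 e2 e3 d1 d2 d3 n t u1 u2 u3 in
  D_forms e1 e2 e3 d1 d2 d3 n (c * t) (c * u1) (c * u2) (c * u3) =
    (c ^+ 2 * F.1.1, c ^+ 2 * F.1.2, c ^+ 2 * F.2).
Proof. by rewrite /D_forms /=; congr (_, _, _); ring. Qed.

Section PrimeField.
Variable p : nat.
Hypothesis p_pr : prime p.
Local Notation P := p%:Z.
Local Notation phi z := (z%:~R : 'F_p).

Lemma primez_neq0 : P != 0.
Proof. by rewrite eqz_nat -lt0n prime_gt0. Qed.

Lemma dvdz_Fp (z : int) : (P %| z)%Z = (phi z == 0).
Proof. exact/dvdz_pcharf/pchar_Fp. Qed.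

Lemma dvdz_Fp_sub (a b : int) : (P %| a - b)%Z = (phi a == phi b).
Proof. by rewrite dvdz_Fp intrB subr_eq0. Qed.

Lemma phi_surj (x : 'F_p) : exists z : int, phi z = x.
Proof. by exists (x : nat)%:Z; apply: natr_Zp. Qed.

Lemma legendre_int (a : int) : legendre a%:~R p = legendreF (phi a).
Proof. by rewrite /legendre /redp numq_int denq_int divr1. Qed.

Lemma legendre_frac (a b : int) :
  ~~ (P %| b)%Z -> legendre (a%:~R / b%:~R) p = legendreF (phi a / phi b).
Proof.
rewrite /legendre /redp; case: divqP => [_|k x _]; first by rewrite dvdz0.
rewrite dvdz_Fp !rmorphM /= mulf_eq0 negb_or => /andP [phik0 _].
by rewrite -mulf_div divff // mul1r.
Qed.

Lemma Zp_sqrt_of_legendre (a : int) :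
  odd p -> legendreF (phi a) = 1 -> exists r, is_Zp_sqrt p a r.
Proof.
move=> p_odd /legendreF1P [a0 [x x2a]]; have [y yx] := phi_surj x.
have y2a : (P %| y ^+ 2 - a)%Z by rewrite dvdz_Fp rmorphB rmorphXn /= yx x2a subrr.
have two_y0 : phi (2 * y) != 0.
  rewrite rmorphM mulf_neq0 //=; last by apply: contraNneq a0 => y0; rewrite -x2a -yx y0 expr0n.
  rewrite -dvdz_Fp dvdzE /= dvdn_prime2 //; apply: contraL p_odd => /eqP -> //.
have [w wE] := phi_surj (phi (2 * y))^-1.
have yw : (P %| 1 - 2 * y * w)%Z by rewrite dvdz_Fp rmorphB rmorph1 rmorphM /= wE mulfV ?subrr.
(* Newton's iteration for a square root of a, with w an inverse of 2 y modulo p. *)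
pose r := fix r k := if k is k'.+1 then r k' - (r k' ^+ 2 - a) * w else y.
have r_inv k : (P ^+ k.+1 %| r k ^+ 2 - a)%Z && (P %| r k - y)%Z.
  elim: k => [|k /andP [rk_a rk_y]]; first by rewrite expr1 y2a subrr dvdz0.
  apply/andP; split; first exact: (newton_sqrt_step yw rk_a rk_y).
  rewrite /= (_ : _ - _ - y = r k - y - (r k ^+ 2 - a) * w); last by ring.
  by apply: rpredB => //; apply/dvdz_mulr/(dvdz_trans _ rk_a); rewrite exprS dvdz_mulr.
have r_dvd k : ((p ^ k)%:Z %| r k ^+ 2 - a)%Z.
  by rewrite PoszX; apply: dvdz_trans (dvdz_exp2l _ (leqnSn k)) _; case/andP: (r_inv k).
exists r; split=> // k; rewrite eqz_mod_dvd /= (_ : _ - r k = - ((r k ^+ 2 - a) * w)).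
  by rewrite rpredN dvdz_mulr.
by ring.
Qed.

Lemma Zp_sqrt_unit (a : int) (r : nat -> int) :
  is_Zp_sqrt p a r -> phi a != 0 -> phi (r 1%N) != 0.
Proof.
by case=> _ /(_ 1%N); rewrite expn1 dvdz_Fp_sub rmorphXn => /eqP <-; rewrite expf_eq0.
Qed.

Lemma D_Qp_nonempty_primitive e1 e2 e3 d1 d2 d3 n :
  D_Qp_nonempty p e1 e2 e3 d1 d2 d3 n ->
  exists T U1 U2 U3 : int,
    let F := D_forms e1 e2 e3 d1 d2 d3 n T U1 U2 U3 in
    [/\ ~~ [&& P %| T, P %| U1, P %| U2 & P %| U3]%Z,
         (P ^+ 2 %| F.1.1)%Z, (P ^+ 2 %| F.1.2)%Z & (P ^+ 2 %| F.2)%Z].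
Proof.
case=> t [u1 [u2 [u3 [[ct c1 c2 c3] nz sol]]]].
(* Precision 2 k leaves room to divide out the common factor p ^ m, m < k. *)
have [k nz_k] : exists k, ~~ all (dvdz (P ^+ k)) [:: t k.*2; u1 k.*2; u2 k.*2; u3 k.*2].
  have at_double x : Zp_coherent p x -> Zp_nonzero p x -> exists k, ~~ (P ^+ k %| x k.*2)%Z.
    by move=> cx /(Zp_nonzero_eventually cx) [k nk]; exists k; rewrite nk // -addnn leq_addr.
  by case: nz => [/at_double|[/at_double|[/at_double|/at_double]]] => -[] // k nk;
    exists k; apply: contra nk => /allP; apply; rewrite !inE eqxx ?orbT.
have [m lt_mk [[|T [|U1 [|U2 [|U3 [|]]]]] //= [eT eU1 eU2 eU3] prim]] :=
  dvdz_scale_primitive primez_neq0 nz_k.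
exists T, U1, U2, U3.
have cancel_scale z : (P ^+ k.*2 %| (P ^+ m) ^+ 2 * z)%Z -> (P ^+ 2 %| z)%Z.
  move=> dz; rewrite -(dvdz_mul2l (expf_neq0 2 (expf_neq0 m primez_neq0))).
  apply: dvdz_trans dz; rewrite -exprM -exprD dvdz_exp2l //.
  by rewrite -mulSnr -muln2 leq_mul2r lt_mk orbT.
case: (sol k.*2); rewrite eT eU1 eU2 eU3 D_forms_scale PoszX => /= *.
by split; [move: prim; rewrite andbT | apply: cancel_scale..].
Qed.

End PrimeField.

Lemma sqfreez_dvdz (p : nat) (d : int) : prime p -> sqfreez d -> (p%:Z %| d)%Z ->
  exists2 d', d = p%:Z * d' & ~~ (p%:Z %| d')%Z.
Proof.
move=> p_pr sq_d /dvdzP [d' dE]; exists d'; first by rewrite dE mulrC.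
apply: contra (sq_d p p_pr) => /dvdzP [c d'E].
by rewrite dE d'E !abszM -mulnA dvdn_mull.
Qed.

Section LocalSolvability.
Variables (p n : nat) (n' : int).
Hypothesis p_pr : prime p.
Local Notation P := p%:Z.
Local Notation phi z := (z%:~R : 'F_p).
Hypotheses (n_eq : n%:Z = P * n') (n'_unit : ~~ (P %| n')%Z).

Lemma legendre_of_D_Qp_unit e1 e2 e3 d1 d2 d3 s :
  ~~ (P %| e1)%Z -> ~~ (P %| d1 * d2 * d3)%Z -> d1 * d2 * d3 = s ^+ 2 ->
  D_Qp_nonempty p e1 e2 e3 d1 d2 d3 n ->
  [/\ legendreF (phi d1) = 1, legendreF (phi d2) = 1 & legendreF (phi d3) = 1].
Proof.
move=> e1u; rewrite dvdz_Fp // !intrM !mulf_eq0 !negb_or => /andP [/andP [d1u d2u] d3u] ds.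
case/(D_Qp_nonempty_primitive p_pr) => T [U1 [U2 [U3 [/= prim F1 F2 F3]]]].
have E31 : phi d3 * phi U3 ^+ 2 = phi d1 * phi U1 ^+ 2.
  move: F2; rewrite n_eq (_ : _ - _ = d3 * U3 ^+ 2 - d1 * U1 ^+ 2 + P * (e2 * n' * T ^+ 2)).
    by move/dvdz_sqr_addMr; rewrite dvdz_Fp_sub // !(rmorphXn, intrM) => /eqP.
  by ring.
have E12 : phi d1 * phi U1 ^+ 2 = phi d2 * phi U2 ^+ 2.
  move: F3; rewrite n_eq (_ : _ - _ = d1 * U1 ^+ 2 - d2 * U2 ^+ 2 + P * (e3 * n' * T ^+ 2)).
    by move/dvdz_sqr_addMr; rewrite dvdz_Fp_sub // !(rmorphXn, intrM) => /eqP.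
  by ring.
have U1u : phi U1 != 0.
  apply: contra prim => /eqP U10.
  have /eqP U20 : phi U2 == 0 by rewrite -(mulf_sqr_eq0 _ d2u) -E12 U10 expr0n mulr0.
  have /eqP U30 : phi U3 == 0 by rewrite -(mulf_sqr_eq0 _ d3u) E31 U10 expr0n mulr0.
  rewrite !dvdz_Fp // U10 U20 U30 eqxx !andbT.
  move/eqP: U20; rewrite -dvdz_Fp // => /dvdzP [a eU2].
  move/eqP: U30; rewrite -dvdz_Fp // => /dvdzP [b eU3].
  move: F1; rewrite n_eq eU2 eU3.
  rewrite (_ : _ - _ = P * (e1 * n' * T ^+ 2 + P * (d2 * a ^+ 2 - d3 * b ^+ 2))); last by ring.
  rewrite dvdz_sqr_mulDMr ?primez_neq0 // dvdz_Fp // !intrM.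
  by rewrite mulf_sqr_eq0 // mulf_neq0 // -dvdz_Fp.
have U2u : phi U2 != 0 by rewrite -(mulf_sqr_eq0 _ d2u) -E12 mulf_sqr_eq0.
have U3u : phi U3 != 0 by rewrite -(mulf_sqr_eq0 _ d3u) E31 mulf_sqr_eq0.
apply: (legendreF_diag_squares d3u U1u U2u U3u _ E31 E12).
by rewrite -!intrM ds rmorphXn.
Qed.

Lemma D_Qp_of_legendre_unit e1 e2 e3 d1 d2 d3 : odd p ->
  [/\ legendreF (phi d1) = 1, legendreF (phi d2) = 1 & legendreF (phi d3) = 1] ->
  D_Qp_nonempty p e1 e2 e3 d1 d2 d3 n.
Proof.
move=> p_odd.
have root d : legendreF (phi d) = 1 ->
    exists r, [/\ Zp_coherent p r, forall k, ((p ^ k)%:Z %| r k ^+ 2 - d)%Z & phi (r 1%N) != 0].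
  move=> ld; have [r rd] := Zp_sqrt_of_legendre p_pr p_odd ld; case: (rd) => cr dr.
  by exists r; split; rewrite // (Zp_sqrt_unit p_pr rd) //; case/legendreF1P: ld.
case=> /root [r1 [c1 s1 _]] /root [r2 [c2 s2 u2]] /root [r3 [c3 s3 u3]].
exists (fun=> 0), (fun k => r2 k * r3 k), (fun k => r1 k * r3 k), (fun k => r1 k * r2 k).
split.
- by split; [exact: Zp_coherent_const | exact: Zp_coherent_mul ..].
- by right; left; exists 1%N; rewrite expn1 dvdz_Fp // intrM mulf_neq0.
move=> k /=; split.
- rewrite (_ : _ - _ = r1 k ^+ 2 * r2 k ^+ 2 * (r3 k ^+ 2 - d3)
                      - r1 k ^+ 2 * r3 k ^+ 2 * (r2 k ^+ 2 - d2)); last by ring.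
  by apply: rpredB; apply: dvdz_mull.
- rewrite (_ : _ - _ = r2 k ^+ 2 * r3 k ^+ 2 * (r1 k ^+ 2 - d1)
                      - r1 k ^+ 2 * r2 k ^+ 2 * (r3 k ^+ 2 - d3)); last by ring.
  by apply: rpredB; apply: dvdz_mull.
- rewrite (_ : _ - _ = r1 k ^+ 2 * r3 k ^+ 2 * (r2 k ^+ 2 - d2)
                      - r2 k ^+ 2 * r3 k ^+ 2 * (r1 k ^+ 2 - d1)); last by ring.
  by apply: rpredB; apply: dvdz_mull.
Qed.

Lemma legendre_of_D_Qp_d2d3 e1 e2 e3 d1 d2' d3' s :
  ~~ (P %| e2)%Z -> ~~ (P %| e3)%Z ->
  ~~ (P %| d1)%Z -> ~~ (P %| d2')%Z -> ~~ (P %| d3')%Z ->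
  d1 * (P * d2') * (P * d3') = s ^+ 2 ->
  D_Qp_nonempty p e1 e2 e3 d1 (P * d2') (P * d3') n ->
  [/\ legendreF (phi (- e2 * e3 * d1)) = 1,
      legendreF (phi (e3 * n') / phi d2') = 1
    & legendreF (phi (- e2 * n') / phi d3') = 1].
Proof.
move=> e2u e3u d1u d2u d3u ds; rewrite !dvdz_Fp // in e2u e3u d1u d2u d3u.
case/(D_Qp_nonempty_primitive p_pr) => T [U1 [U2 [U3 [/= prim F1 F2 F3]]]].
have /dvdzP [V1 eU1] : (P %| U1)%Z.
  move: F2; rewrite n_eq (_ : _ - _ = - (d1 * U1 ^+ 2) + P * (e2 * n' * T ^+ 2 + d3' * U3 ^+ 2)).
    by move/dvdz_sqr_addMr; rewrite rpredN !dvdz_Fp // !(rmorphXn, intrM) mulf_sqr_eq0.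
  by ring.
have E2 : phi d2' * phi U2 ^+ 2 = phi e3 * phi n' * phi T ^+ 2.
  move: F3; rewrite n_eq eU1.
  rewrite (_ : _ - _ = P * (e3 * n' * T ^+ 2 - d2' * U2 ^+ 2 + P * (d1 * V1 ^+ 2))).
    by rewrite dvdz_sqr_mulDMr ?primez_neq0 // dvdz_Fp_sub // !(rmorphXn, intrM) => /eqP/esym.
  by ring.
have E3 : phi d3' * phi U3 ^+ 2 = phi (- e2) * phi n' * phi T ^+ 2.
  move: F2; rewrite n_eq eU1.
  rewrite (_ : _ - _ = P * (d3' * U3 ^+ 2 - - e2 * n' * T ^+ 2 + P * - (d1 * V1 ^+ 2))).
    by rewrite dvdz_sqr_mulDMr ?primez_neq0 // dvdz_Fp_sub // !(rmorphXn, intrM) => /eqP.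
  by ring.
have n'u : phi n' != 0 by rewrite -dvdz_Fp.
have e2u' : phi (- e2) != 0 by rewrite intrN oppr_eq0.
have Tu : phi T != 0.
  apply: contra prim => /eqP T0.
  have /eqP U20 : phi U2 == 0 by rewrite -(mulf_sqr_eq0 _ d2u) E2 T0 expr0n mulr0.
  have /eqP U30 : phi U3 == 0 by rewrite -(mulf_sqr_eq0 _ d3u) E3 T0 expr0n mulr0.
  by rewrite eU1 (dvdz_mull _ (dvdzz P)) !dvdz_Fp // T0 U20 U30 eqxx.
have /dvdzP [s' es] : (P %| s)%Z.
  have : (P %| s ^+ 2)%Z by rewrite -ds dvdz_mull // dvdz_mulr.
  by rewrite !dvdz_Fp // rmorphXn expf_eq0.
have ds' : d1 * d2' * d3' = s' ^+ 2.
  apply: (mulfI (mulf_neq0 (primez_neq0 p_pr) (primez_neq0 p_pr))).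
  by transitivity (s ^+ 2); [rewrite -ds | rewrite es]; ring.
rewrite !intrM; apply: (legendreF_twisted_squares e3u e2u' n'u d1u d2u d3u Tu _ E2 E3).
by rewrite -!intrM ds' rmorphXn.
Qed.

Lemma D_Qp_of_legendre_d2d3 e1 e2 e3 d1 d2' d3' :
  odd p -> e1 + e2 + e3 = 0 -> ~~ (P %| d2')%Z -> ~~ (P %| d3')%Z ->
  legendreF (phi (e3 * n') / phi d2') = 1 ->
  legendreF (phi (- e2 * n') / phi d3') = 1 ->
  D_Qp_nonempty p e1 e2 e3 d1 (P * d2') (P * d3') n.
Proof.
move=> p_odd /eqP; rewrite -addrA addr_eq0 => /eqP e1E d2u d3u l2 l3.
rewrite !dvdz_Fp // in d2u d3u.
have root a b : phi b != 0 -> legendreF (phi a / phi b) = 1 -> exists r, is_Zp_sqrt p (a * b) r.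
  move=> b0 lab; apply: (Zp_sqrt_of_legendre p_pr p_odd).
  by rewrite intrM -[phi a](divfK b0) -[_ * phi b * phi b]mulrA -expr2 legendreF_mul_sqr.
have [q2 [c2 s2]] := root _ _ d2u l2; have [q3 [c3 s3]] := root _ _ d3u l3.
exists (fun=> d2' * d3'), (fun=> 0), (fun k => d3' * q2 k), (fun k => d2' * q3 k).
split.
- by split; [exact: Zp_coherent_const .. | exact/Zp_coherent_mul/c2/Zp_coherent_const
                                         | exact/Zp_coherent_mul/c3/Zp_coherent_const].
- by left; exists 1%N; rewrite expn1 dvdz_Fp // intrM mulf_neq0.
move=> k /=; rewrite n_eq e1E; split.
- rewrite (_ : _ - _ = P * d2' * d3' ^+ 2 * (q2 k ^+ 2 - e3 * n' * d2')
                      - P * d2' ^+ 2 * d3' * (q3 k ^+ 2 - - e2 * n' * d3')); last by ring.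
  by apply: rpredB; apply: dvdz_mull.
- rewrite (_ : _ - _ = P * d2' ^+ 2 * d3' * (q3 k ^+ 2 - - e2 * n' * d3')); last by ring.
  exact: dvdz_mull.
- rewrite (_ : _ - _ = - (P * d2' * d3' ^+ 2 * (q2 k ^+ 2 - e3 * n' * d2'))); last by ring.
  by rewrite rpredN; apply: dvdz_mull.
Qed.

Lemma D_Qp_nonempty_unitP e1 e2 e3 d1 d2 d3 s :
  odd p -> ~~ (P %| e1)%Z -> d1 * d2 * d3 = s ^+ 2 -> ~~ (P %| d1 * d2 * d3)%Z ->
  D_Qp_nonempty p e1 e2 e3 d1 d2 d3 n <->
  [/\ legendre d1%:~R p = 1, legendre d2%:~R p = 1 & legendre d3%:~R p = 1].
Proof.
move=> p_odd e1u ds d_u; rewrite !legendre_int.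
by split=> [/(legendre_of_D_Qp_unit e1u d_u ds) | /(D_Qp_of_legendre_unit _ _ _ p_odd)].
Qed.

Lemma D_Qp_nonempty_d2d3P e1 e2 e3 d1 d2 d3 s :
  odd p -> e1 + e2 + e3 = 0 -> ~~ (P %| e2)%Z -> ~~ (P %| e3)%Z ->
  d1 * d2 * d3 = s ^+ 2 -> sqfreez d2 -> sqfreez d3 ->
  ~~ (P %| d1)%Z -> (P %| d2)%Z -> (P %| d3)%Z ->
  D_Qp_nonempty p e1 e2 e3 d1 d2 d3 n <->
  [/\ legendre ((- e2 * e3 * d1)%:~R) p = 1,
      legendre (e3%:~R * n%:R / d2%:~R) p = 1
    & legendre (- e2%:~R * n%:R / d3%:~R) p = 1].
Proof.
move=> p_odd esum e2u e3u ds sq2 sq3 d1u.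
move=> /(sqfreez_dvdz p_pr sq2) [d2' d2E d2u] /(sqfreez_dvdz p_pr sq3) [d3' d3E d3u].
subst d2 d3.
have cancelP (a c : int) : ~~ (P %| c)%Z ->
    legendre (a%:~R * n%:R / (P * c)%:~R) p = legendreF (phi (a * n') / phi c).
  move=> cu; rewrite -legendre_frac // pmulrn n_eq !intrM; congr legendre.
  have c0 : c%:~R != 0 :> rat by rewrite intr_eq0; apply: contraNneq cu => ->.
  by field; rewrite c0 pnatr_eq0 -lt0n prime_gt0.
rewrite legendre_int cancelP // -intrN cancelP //.
split=> [/(legendre_of_D_Qp_d2d3 e2u e3u d1u d2u d3u ds) | [_]] //.
exact: D_Qp_of_legendre_d2d3.
Qed.

End LocalSolvability.

Theorem lemma2p5 (e1 e2 e3 d1 d2 d3 : int) (n p : nat)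
  (he1 : e1 != 0) (he2 : e2 != 0) (he3 : e3 != 0) (hsum : e1 + e2 + e3 = 0)
  (hd1 : d1 != 0) (hd2 : d2 != 0) (hd3 : d3 != 0)
  (sqd1 : sqfreez d1) (sqd2 : sqfreez d2) (sqd3 : sqfreez d3)
  (hsq : exists s : int, d1 * d2 * d3 = s ^+ 2)
  (hn : (0 < n)%N) (sqn : sqfree n) (hcop : coprime n (absz (e1 * e2 * e3)))
  (hp : prime p) (hodd : odd p) (hpn : (p %| n)%N) :
  let P := D_Qp_nonempty p e1 e2 e3 d1 d2 d3 n in
  let q (x : int) : rat := x%:~R in
  [/\ ~~ (p%:Z %| d1 * d2 * d3)%Z ->
        (P <-> [/\ legendre (q d1) p = 1, legendre (q d2) p = 1
                 & legendre (q d3) p = 1]),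
      [&& ~~ (p%:Z %| d1)%Z, (p%:Z %| d2)%Z & (p%:Z %| d3)%Z] ->
        (P <-> [/\ legendre (q (- e2 * e3 * d1)) p = 1,
                   legendre (q e3 * n%:R / q d2) p = 1
                 & legendre (- q e2 * n%:R / q d3) p = 1]),
      [&& (p%:Z %| d1)%Z, ~~ (p%:Z %| d2)%Z & (p%:Z %| d3)%Z] ->
        (P <-> [/\ legendre (- q e3 * n%:R / q d1) p = 1,
                   legendre (q (- e3 * e1 * d2)) p = 1
                 & legendre (q e1 * n%:R / q d3) p = 1])
    & [&& (p%:Z %| d1)%Z, (p%:Z %| d2)%Z & ~~ (p%:Z %| d3)%Z] ->
        (P <-> [/\ legendre (q e2 * n%:R / q d1) p = 1,
                   legendre (- q e1 * n%:R / q d2) p = 1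
                 & legendre (q (- e1 * e2 * d3)) p = 1])].
Proof.
move=> P q; rewrite {}/P {}/q; have [s ds] := hsq.
have [n' n_eq n'_unit] := sqfreez_dvdz hp (sqn : sqfreez n) (hpn : (p%:Z %| n%:Z)%Z).
have [e1u e2u e3u] : [/\ ~~ (p%:Z %| e1)%Z, ~~ (p%:Z %| e2)%Z & ~~ (p%:Z %| e3)%Z].
  have : ~~ (p %| absz (e1 * e2 * e3)%R)%N by rewrite -prime_coprime // (coprime_dvdl hpn hcop).
  by rewrite !abszM !Euclid_dvdM // !negb_or => /andP [/andP [? ?] ?].
split.
- exact: (D_Qp_nonempty_unitP hp n_eq n'_unit e2 e3 hodd e1u ds).
- case/and3P=> d1u d2p d3p.
  exact: (D_Qp_nonempty_d2d3P hp n_eq n'_unit hodd hsum e2u e3u ds sqd2 sqd3 d1u d2p d3p).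
- case/and3P=> d1p d2u d3p; rewrite D_Qp_nonempty_rotP.
  have sum231 : e2 + e3 + e1 = 0 by rewrite -hsum; ring.
  have sq231 : d2 * d3 * d1 = s ^+ 2 by rewrite -ds; ring.
  rewrite (D_Qp_nonempty_d2d3P hp n_eq n'_unit hodd sum231 e3u e1u sq231 sqd3 sqd1 d2u d3p d1p).
  by split=> -[] *; split.
- case/and3P=> d1p d2p d3u; rewrite 2!D_Qp_nonempty_rotP.
  have sum312 : e3 + e1 + e2 = 0 by rewrite -hsum; ring.
  have sq312 : d3 * d1 * d2 = s ^+ 2 by rewrite -ds; ring.
  rewrite (D_Qp_nonempty_d2d3P hp n_eq n'_unit hodd sum312 e1u e2u sq312 sqd1 sqd2 d3u d1p d2p).
  by split=> -[] *; split.
Qed.
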